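(* Let $F$ be a Henselian discretely valued field with residue field $\kappa$ and completion $\hat{F}$. Let $L_1,\dots,L_m$ be finite separable field extensions of $F$ with $[L_i:F]=n_i$, where $\mathrm{char}(\kappa)$ does not divide $n_i$ and $F$ contains a primitive $n_i^2$-th root of unity, for all $1\le i\le m$. Let $L=\prod_{i=1}^m L_i$. Then the natural map $T_{L/F}(F)\to T_{L/F}(\hat{F})/R$ is surjective.
   Context: The multinorm torus $T_{L/F}$ is the kernel of $\prod_{i} R_{L_i/F}\mathbb{G}_m\to\mathbb{G}_m$, $(x_i)\mapsto\prod_i N_{L_i/F}(x_i)$. For a torus $T$ over $F$ and a field extension $M/F$, $T(M)/R$ is the quotient of $T(M)$ by the subgroup of elements $R$-equivalent to the identity, $R$-equivalence being generated by: $x_0\sim x_1$ if some $M$-rational map $f:\mathbb{P}^1\dashrightarrow T$ satisfies $f(0)=x_0$, $f(1)=x_1$. *)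

From HB Require Import structures.
From mathcomp Require Import all_boot all_order all_algebra all_field.
From Stdlib Require Import Relations.
Set Implicit Arguments. Unset Strict Implicit. Unset Printing Implicit Defensive.
Import Order.TTheory GRing.Theory Num.Theory.
Local Open Scope ring_scope.

(* v x is only meaningful for x != 0 (v 0 = +oo by convention). *)
Definition is_dvaluation (K : fieldType) (v : K -> int) : Prop :=
  [/\ forall x y : K, x != 0 -> y != 0 -> v (x * y) = v x + v y,
      forall x y : K, x != 0 -> y != 0 -> x + y != 0 ->
        Num.min (v x) (v y) <= v (x + y)
    & exists pi : K, pi != 0 /\ v pi = 1].

Definition vint (K : fieldType) (v : K -> int) (x : K) : bool :=
  (x == 0) || (0 <= v x).
Definition vmax (K : fieldType) (v : K -> int) (x : K) : bool :=
  (x == 0) || (0 < v x).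
Definition vge (K : fieldType) (v : K -> int) (N : int) (x : K) : bool :=
  (x == 0) || (N <= v x).

Definition henselian (K : fieldType) (v : K -> int) : Prop :=
  forall (p : {poly K}) (a : K),
    p \is monic -> (forall i, vint v p`_i) -> vint v a ->
    vmax v p.[a] -> ~~ vmax v (p^`()).[a] ->
    exists b : K, root p b /\ vmax v (b - a).

(* char of the residue field does not divide n  <=>  n is a unit in O_v *)
Definition resid_char_ndiv (K : fieldType) (v : K -> int) (n : nat) : Prop :=
  (n%:R : K) != 0 /\ v (n%:R) = 0.

Definition is_completion (F Fh : fieldType) (v : F -> int)
    (iota : {rmorphism F -> Fh}) (vh : Fh -> int) : Prop :=
  [/\ is_dvaluation vh,
      forall x : F, x != 0 -> vh (iota x) = v x,
      forall s : nat -> Fh,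
        (forall N : int, exists k, forall i j, (k <= i)%N -> (k <= j)%N ->
            vge vh N (s i - s j)) ->
        exists l : Fh, forall N : int, exists k, forall i, (k <= i)%N ->
            vge vh N (s i - l)
    &
      forall (x : Fh) (N : int), exists y : F, vge vh N (iota y - x)].

Section Torus.
Variable F : fieldType.

Definition mulcoef (L : fieldExtType F) (k i j : 'I_(\dim {:L})) : F :=
  coord (vbasis {:L}) j (tnth (vbasis {:L}) k * tnth (vbasis {:L}) i).

(* For an F-algebra A (structure map phi) and x in L (x)_F A given by its
   coordinates x : 'rV[A]_n, the norm N_{L(x)A / A}(x) = det(mult. by x). *)
Definition normA (A : comRingType) (phi : F -> A) (L : fieldExtType F)
    (x : 'rV[A]_(\dim {:L})) : A :=
  \det (\matrix_(i, j) \sum_k x 0 k * phi (mulcoef k i j)).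

(* A-points of T_{L/F}, L = prod_i L_i : tuples with prod of norms = 1
   (this forces each coordinate to be a unit of L_i (x) A). *)
Definition pts (m : nat) (L : 'I_m -> fieldExtType F) (A : Type) : Type :=
  forall i : 'I_m, 'rV[A]_(\dim {:L i}).

Definition inT (m : nat) (L : 'I_m -> fieldExtType F) (A : comRingType)
    (phi : F -> A) (x : pts L A) : Prop :=
  \prod_(i < m) normA phi (x i) = 1.

(* Elementary R-link over a field M (an F-algebra via iota): there is an
   M-rational map f : P^1 --> T defined at 0 and 1 with f(0)=x0, f(1)=x1.
   Such f is a point of T(O), O = local ring of M[t] at {0,1}; we write its
   coordinates with a common denominator q (q(0), q(1) <> 0), numerators P;
   the condition prod_i N(P_i/q) = 1 reads prod_i N(P_i) = q^(sum_i n_i). *)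
Definition Rlink (m : nat) (L : 'I_m -> fieldExtType F) (M : fieldType)
    (iota : {rmorphism F -> M}) (x0 x1 : pts L M) : Prop :=
  exists (q : {poly M}) (P : pts L {poly M}),
    [/\ q.[0] != 0, q.[1] != 0,
        \prod_(i < m) normA (fun a => (iota a)%:P) (P i)
          = q ^+ (\sum_(i < m) \dim {:L i}),
        forall i k, (P i 0 k).[0] / q.[0] = x0 i 0 k
      & forall i k, (P i 0 k).[1] / q.[1] = x1 i 0 k].

Definition Requiv (m : nat) (L : 'I_m -> fieldExtType F) (M : fieldType)
    (iota : {rmorphism F -> M}) : relation (pts L M) :=
  clos_refl_sym_trans _ (Rlink iota).

End Torus.

(* Write x = (x_i) with x_i in L_i (x) F^ and let n = [L_1 : F].  As F is dense
   in F^, x_i^-1 is approximated by some r_i in L_i; then x_i r_i is close to 1,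
   so it has an n-th root 1 + e_i in L_i (x) F^ (n is a unit, and F^ is complete).
   Hence x_i = u_i (1 + e_i)^n with u_i = r_i^-1 in L_i.  The scalar
   S = prod_i N(1 + e_i) is close to 1 and S^n = (prod_i N(u_i))^-1 lies in F, so
   by Hensel's lemma and the n-th roots of unity of F, S itself lies in F.  Finally
     t |-> ((S / s(t)) u_1 (1 + t e_1)^n, u_2 (1 + t e_2)^n, ..., u_m (1 + t e_m)^n),
   where s(t) = prod_i N(1 + t e_i), is a rational curve on T over F^ joining the
   F-point (S u_1, u_2, ..., u_m) at t = 0 to x at t = 1. *)

From HB Require Import structures.
From mathcomp Require Import all_boot all_order all_algebra all_field.
From Stdlib Require Import Relations.
From mathcomp Require Import zify ring.
Import Order.TTheory GRing.Theory Num.Theory.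
Local Open Scope ring_scope.

Set Implicit Arguments. Unset Strict Implicit. Unset Printing Implicit Defensive.

Section StructureConstants.
Variables (F : fieldType) (L : fieldExtType F).
Local Notation d := (\dim {:L}).
Local Notation b k := (tnth (vbasis {:L}) k).

Definition vbasis_mulmx (k : 'I_d) : 'M[F]_d := \matrix_(i, j) mulcoef k i j.
Definition coord1 : 'rV[F]_d := \row_j coord (vbasis {:L}) j 1.

Lemma mulcoefC k i j : mulcoef (L:=L) k i j = mulcoef i k j.
Proof. by rewrite /mulcoef mulrC. Qed.

Lemma coord_mul_vbasis (x y : L) q :
  coord (vbasis {:L}) q (x * y) =
  \sum_l coord (vbasis {:L}) l y * coord (vbasis {:L}) q (x * b l).
Proof.
rewrite {1}(coord_vbasis (memvf y)) mulr_sumr linear_sum; apply: eq_bigr => l _.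
by rewrite -scalerAr linearZ /= (tnth_nth 0).
Qed.

Lemma vbasis_mulmxM i k :
  vbasis_mulmx i *m vbasis_mulmx k = \sum_j mulcoef k i j *: vbasis_mulmx j.
Proof.
apply/matrixP => p q; rewrite !mxE summxE.
under eq_bigr do rewrite !mxE /mulcoef.
under [RHS]eq_bigr do rewrite !mxE /mulcoef (mulrC (b _) (b p)).
rewrite -!coord_mul_vbasis; congr (coord _ _ _).
by rewrite mulrA [b k * _]mulrC -mulrA [b p * _]mulrC mulrA.
Qed.

Lemma sum_coord1_vbasis_mulmx : \sum_k coord1 0 k *: vbasis_mulmx k = 1%:M.
Proof.
apply/matrixP => p q; rewrite summxE !mxE.
under eq_bigr do rewrite !mxE /mulcoef (mulrC (b _)).
rewrite -coord_mul_vbasis mulr1 (tnth_nth 0) coord_free //.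
exact: basis_free (vbasisP _).
Qed.

End StructureConstants.

Section Tensor.
Variables (F : fieldType) (L : fieldExtType F).
Variables (A : comNzRingType) (phi : {rmorphism F -> A}).
Local Notation d := (\dim {:L}).

Definition lmulmx (a : 'rV[A]_d) : 'M[A]_d :=
  \sum_k a 0 k *: map_mx phi (vbasis_mulmx k).
Definition tensor_one : 'rV[A]_d := map_mx phi (coord1 L).

Lemma lmulmxD : {morph lmulmx : a b / a + b}.
Proof.
move=> a b; rewrite /lmulmx -big_split; apply: eq_bigr => k _.
by rewrite mxE scalerDl.
Qed.

Lemma lmulmxZ c a : lmulmx (c *: a) = c *: lmulmx a.
Proof.
rewrite /lmulmx scaler_sumr; apply: eq_bigr => k _.
by rewrite mxE scalerA.
Qed.

Lemma lmulmx1 : lmulmx tensor_one = 1%:M.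
Proof.
rewrite -(map_mx1 phi) -(sum_coord1_vbasis_mulmx L); apply/matrixP => p q.
rewrite !mxE !summxE rmorph_sum; apply: eq_bigr => k _.
by rewrite !mxE rmorphM.
Qed.

Lemma map_vbasis_mulmxM (i k : 'I_d) :
  map_mx phi (vbasis_mulmx i) *m map_mx phi (vbasis_mulmx k)
  = \sum_j phi (mulcoef k i j) *: map_mx phi (vbasis_mulmx j).
Proof.
rewrite -map_mxM vbasis_mulmxM; apply/matrixP => p q.
rewrite !mxE !summxE rmorph_sum; apply: eq_bigr => j _.
by rewrite !mxE rmorphM.
Qed.

Lemma lmulmxM a c : lmulmx (a *m lmulmx c) = lmulmx a *m lmulmx c.
Proof.
rewrite /lmulmx mulmx_suml.
transitivity (\sum_i \sum_k (a 0 i * c 0 k) *: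
    (map_mx phi (vbasis_mulmx i) *m map_mx phi (vbasis_mulmx k))); last first.
  apply: eq_bigr => i _; rewrite -scalemxAl mulmx_sumr scaler_sumr.
  by apply: eq_bigr => k _; rewrite -scalemxAr scalerA.
under [RHS]eq_bigr do under eq_bigr do rewrite map_vbasis_mulmxM scaler_sumr.
under [RHS]eq_bigr do rewrite exchange_big /=.
rewrite exchange_big /=; apply: eq_bigr => j _.
rewrite mxE scaler_suml; apply: eq_bigr => i _.
rewrite summxE mulr_sumr scaler_suml; apply: eq_bigr => k _.
by rewrite !mxE scalerA mulrA [a 0 i * c 0 k]mulrC.
Qed.

Definition tensor_mul (a c : 'rV[A]_d) := a *m lmulmx c.

Lemma tensor_mulC : commutative tensor_mul.
Proof.
move=> a c; apply/rowP => j; rewrite /tensor_mul /lmulmx !mxE.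
under eq_bigr do rewrite summxE mulr_sumr.
under [RHS]eq_bigr do rewrite summxE mulr_sumr.
rewrite exchange_big /=; apply: eq_bigr => i _; apply: eq_bigr => k _.
by rewrite !mxE mulcoefC mulrCA.
Qed.

Lemma tensor_mulA : associative tensor_mul.
Proof. by move=> a c e; rewrite /tensor_mul lmulmxM mulmxA. Qed.

Lemma tensor_mul1 : left_id tensor_one tensor_mul.
Proof. by move=> a; rewrite tensor_mulC /tensor_mul lmulmx1 mulmx1. Qed.

Lemma tensor_mulDl : left_distributive tensor_mul +%R.
Proof. by move=> a c e; rewrite /tensor_mul mulmxDl. Qed.

(* [tensor L phi] is [L (x)_F A] for the [F]-algebra [A] with structure map [phi],
   an element being its row of coordinates in [vbasis {:L}]. *)
Definition tensor : Type := let _ := phi in 'rV[A]_d.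
HB.instance Definition _ := GRing.Lmodule.on tensor.
HB.instance Definition _ := GRing.Zmodule_isComPzRing.Build tensor
  tensor_mulA tensor_mulC tensor_mul1 tensor_mulDl.

Definition tnorm (a : tensor) : A := \det (lmulmx a).

Lemma tensor_mulE (a c : tensor) : a * c = a *m lmulmx c. Proof. by []. Qed.

Lemma tensor_scalerAl c (a e : tensor) : (c *: a) * e = c *: (a * e).
Proof. by rewrite !tensor_mulE scalemxAl. Qed.

Lemma tnorm_normA (a : tensor) : normA phi a = tnorm a.
Proof.
congr (\det _); apply/matrixP => i j; rewrite !mxE summxE.
by apply: eq_bigr => k _; rewrite !mxE.
Qed.

Lemma tnormM (a c : tensor) : tnorm (a * c) = tnorm a * tnorm c.
Proof. by rewrite /tnorm tensor_mulE lmulmxM det_mulmx. Qed.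

Lemma tnorm1 : tnorm 1 = 1.
Proof. by rewrite /tnorm lmulmx1 det1. Qed.

Lemma tnormX (a : tensor) k : tnorm (a ^+ k) = tnorm a ^+ k.
Proof. by elim: k => [|k IH]; rewrite ?expr0 ?tnorm1 // !exprS tnormM IH. Qed.

Lemma tnormZ c (a : tensor) : tnorm (c *: a) = c ^+ d * tnorm a.
Proof. by rewrite /tnorm lmulmxZ detZ. Qed.

End Tensor.

Section TensorMap.
Variables (F : fieldType) (L : fieldExtType F).
Variables (A B : comNzRingType) (phiA : {rmorphism F -> A}) (phiB : {rmorphism F -> B}).
Variable f : {rmorphism A -> B}.
Hypothesis f_phi : forall x, f (phiA x) = phiB x.

Definition tmap (a : tensor L phiA) : tensor L phiB := map_mx f a.

Lemma lmulmx_map (a : tensor L phiA) : map_mx f (lmulmx phiA a) = lmulmx phiB (tmap a).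
Proof.
apply/matrixP => i j; rewrite mxE /lmulmx !summxE rmorph_sum; apply: eq_bigr => k _.
by rewrite !mxE rmorphM f_phi.
Qed.

Lemma tmapD (a c : tensor L phiA) : tmap (a + c) = tmap a + tmap c.
Proof. exact: map_mxD. Qed.

Lemma tmapZ x (a : tensor L phiA) : tmap (x *: a) = f x *: tmap a.
Proof. by apply/rowP => j; rewrite !mxE rmorphM. Qed.

Lemma tmapM (a c : tensor L phiA) : tmap (a * c) = tmap a * tmap c.
Proof. by rewrite /tmap !tensor_mulE map_mxM lmulmx_map. Qed.

Lemma tmap1 : tmap 1 = 1.
Proof. by apply/rowP => j; rewrite !mxE f_phi. Qed.

Lemma tmapX (a : tensor L phiA) k : tmap (a ^+ k) = tmap a ^+ k.
Proof. by elim: k => [|k IH]; rewrite ?expr0 ?tmap1 // !exprS tmapM IH. Qed.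

Lemma tnorm_map (a : tensor L phiA) : f (tnorm a) = tnorm (tmap a).
Proof. by rewrite /tnorm -det_map_mx lmulmx_map. Qed.

End TensorMap.
Arguments tmap {F L A B phiA phiB} f a.
Arguments tmapD {F L A B phiA phiB} f a c.
Arguments tmapZ {F L A B phiA phiB} f x a.

Section TensorInverse.
Variables (F : fieldType) (L : fieldExtType F).
Variables (A : fieldType) (phi : {rmorphism F -> A}).

Definition tensor_inv (a : tensor L phi) : tensor L phi :=
  (1 : tensor L phi) *m invmx (lmulmx phi a).

Lemma mulr_tensor_inv (a : tensor L phi) : tnorm a != 0 -> a * tensor_inv a = 1.
Proof.
move=> na; rewrite mulrC tensor_mulE /tensor_inv -mulmxA mulVmx ?mulmx1 //.
by rewrite unitmxE unitfE.
Qed.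

End TensorInverse.

Section DiscreteValuation.
Variables (K : fieldType) (w : K -> int).
Hypothesis hw : is_dvaluation w.

Lemma dvalM x y : x != 0 -> y != 0 -> w (x * y) = w x + w y.
Proof. by case: hw => + _ _; apply. Qed.

Lemma dval1 : w 1 = 0.
Proof.
have := dvalM (oner_neq0 K) (oner_neq0 K); rewrite mulr1 => h.
by apply: (addrI (w 1)); rewrite addr0 -h.
Qed.

Lemma dvalN x : w (- x) = w x.
Proof.
have [->|x0] := eqVneq x 0; first by rewrite oppr0.
have N1_neq0 : (-1 : K) != 0 by rewrite oppr_eq0 oner_neq0.
have wN1 : w (-1) = 0.
  by have := dvalM N1_neq0 N1_neq0; rewrite mulrNN mulr1 dval1 => ?; lia.
by rewrite -mulN1r dvalM // wN1 add0r.
Qed.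

Lemma vge0 N : vge w N 0. Proof. by rewrite /vge eqxx. Qed.

Lemma vge1 : vge w 0 1.
Proof. by rewrite /vge dval1 lexx orbT. Qed.

Lemma vge_le N N' x : N' <= N -> vge w N x -> vge w N' x.
Proof. by move=> h; rewrite /vge => /orP[->//|h2]; rewrite (le_trans h h2) orbT. Qed.

Lemma vgeD N x y : vge w N x -> vge w N y -> vge w N (x + y).
Proof.
rewrite /vge; have [->|x0] := eqVneq x 0; first by rewrite add0r.
have [->|y0] := eqVneq y 0; first by rewrite addr0 (negPf x0) => ? _.
have [->//|s0] := eqVneq (x + y) 0; rewrite /= => hx hy.
case: hw => _ /(_ x y x0 y0 s0) + _; apply: le_trans.
by rewrite le_min hx hy.
Qed.

Lemma vgeN N x : vge w N x -> vge w N (- x).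
Proof. by rewrite /vge oppr_eq0 dvalN. Qed.

Lemma vgeB N x y : vge w N x -> vge w N y -> vge w N (x - y).
Proof. by move=> hx hy; apply: vgeD => //; apply: vgeN. Qed.

Lemma vgeM N M x y : vge w N x -> vge w M y -> vge w (N + M) (x * y).
Proof.
rewrite /vge; have [->|x0] := eqVneq x 0; first by rewrite mul0r eqxx.
have [->|y0] := eqVneq y 0; first by rewrite mulr0 eqxx.
by rewrite mulf_eq0 (negPf x0) (negPf y0) /= dvalM // => hx hy; apply: lerD.
Qed.

Lemma vge_sum N (I : Type) (r : seq I) (P : pred I) (f : I -> K) :
  (forall i, P i -> vge w N (f i)) -> vge w N (\sum_(i <- r | P i) f i).
Proof.
move=> h; elim/big_rec: _ => [|i x Pi hx]; first exact: vge0.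
by apply: vgeD => //; apply: h.
Qed.

Lemma vge_prod (I : Type) (r : seq I) (f : I -> K) :
  (forall i, vge w 0 (f i)) -> vge w 0 (\prod_(i <- r) f i).
Proof.
move=> h; elim/big_rec: _ => [|i x _ hx]; first exact: vge1.
by rewrite -(add0r 0); apply: vgeM.
Qed.

Lemma vge_eq0 x : (forall N, vge w N x) -> x = 0.
Proof.
by move=> /(_ (w x + 1)); rewrite /vge => /orP[/eqP//|]; lia.
Qed.

Lemma vge_sign n : vge w 0 ((-1) ^+ n).
Proof.
elim: n => [|n IH]; first by rewrite expr0 vge1.
by rewrite exprS -(add0r 0); apply: vgeM => //; apply: vgeN; apply: vge1.
Qed.

Lemma vgeV x : x != 0 -> w x = 0 -> vge w 0 x^-1.
Proof.
move=> x0 wx; rewrite /vge invr_eq0 (negPf x0) /=.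
by have := dvalM x0 (invr_neq0 x0); rewrite mulfV // dval1 wx add0r => <-.
Qed.

Lemma vge_bound (I : finType) (f : I -> K) :
  exists C : int, 0 <= C /\ forall i, vge w (- C) (f i).
Proof.
exists (\sum_i `|w (f i)|); split; first by apply: sumr_ge0.
move=> i; rewrite /vge lerNl (bigD1 i) //=; apply/orP; right.
apply: le_trans (_ : `|w (f i)| <= _); first by rewrite -normrN ler_norm.
by rewrite lerDl sumr_ge0.
Qed.

Lemma vge_prodB N (I : Type) (r : seq I) (a b : I -> K) :
  (forall i, vge w 0 (a i)) -> (forall i, vge w 0 (b i)) ->
  (forall i, vge w N (a i - b i)) ->
  vge w N (\prod_(i <- r) a i - \prod_(i <- r) b i).
Proof.
move=> ha hb hab; elim: r => [|i r IH]; first by rewrite !big_nil subrr vge0.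
rewrite !big_cons (_ : _ - _ = (a i - b i) * \prod_(j <- r) a j
    + b i * (\prod_(j <- r) a j - \prod_(j <- r) b j)); last first.
  by rewrite mulrBl mulrBr addrA subrK.
apply: vgeD; first by rewrite -[N]addr0; apply: vgeM => //; apply: vge_prod.
by rewrite -[N]add0r; apply: vgeM.
Qed.

Lemma vge_detB N n (M1 M2 : 'M[K]_n) :
  (forall i j, vge w 0 (M1 i j)) -> (forall i j, vge w 0 (M2 i j)) ->
  (forall i j, vge w N (M1 i j - M2 i j)) -> vge w N (\det M1 - \det M2).
Proof.
move=> h1 h2 h12; rewrite /determinant -sumrB; apply: vge_sum => s _.
rewrite -mulrBr -[N]add0r; apply: vgeM; first exact: vge_sign.
by apply: vge_prodB.
Qed.

Lemma vge0_near1 x : vge w 1 (x - 1) -> vge w 0 x.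
Proof. by move=> h; rewrite -(subrK 1 x); apply: vgeD; [apply: vge_le h|apply: vge1]. Qed.

Lemma vge_near1_neq0 x : vge w 1 (x - 1) -> x != 0.
Proof.
by apply: contraTneq => ->; rewrite sub0r /vge oppr_eq0 oner_eq0 dvalN dval1.
Qed.

Lemma vge_prod_near1 (I : Type) (r : seq I) (f : I -> K) :
  (forall i, vge w 1 (f i - 1)) -> vge w 1 (\prod_(i <- r) f i - 1).
Proof.
move=> h; have := @vge_prodB 1 _ r f (fun=> 1); rewrite big1_eq; apply=> // i.
  exact: vge0_near1.
exact: vge1.
Qed.

Lemma vge_exp_near1 x k : vge w 1 (x - 1) -> vge w 1 (x ^+ k - 1).
Proof.
move=> hx; elim: k => [|k IH]; first by rewrite expr0 subrr vge0.
rewrite exprS (_ : _ - 1 = (x - 1) * x ^+ k + (x ^+ k - 1)); last by ring.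
apply: vgeD => //; rewrite -[1]addr0; apply: vgeM => //.
exact/vge0_near1/IH.
Qed.

End DiscreteValuation.

Definition vcomplete (K : fieldType) (w : K -> int) : Prop :=
  forall s : nat -> K,
    (forall N : int, exists k, forall i j, (k <= i)%N -> (k <= j)%N ->
        vge w N (s i - s j)) ->
    exists l : K, forall N : int, exists k, forall i, (k <= i)%N ->
        vge w N (s i - l).

Section RowValuation.
Variables (K : fieldType) (w : K -> int) (d : nat).
Hypothesis hw : is_dvaluation w.

Definition rowvge N (a : 'rV[K]_d) := forall j, vge w N (a 0 j).

Lemma rowvge0 N : rowvge N 0.
Proof. by move=> j; rewrite mxE; apply: vge0. Qed.

Lemma rowvgeD N a b : rowvge N a -> rowvge N b -> rowvge N (a + b).
Proof. by move=> ha hb j; rewrite mxE; apply: vgeD. Qed.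

Lemma rowvgeN N a : rowvge N a -> rowvge N (- a).
Proof. by move=> ha j; rewrite mxE; apply: vgeN. Qed.

Lemma rowvgeB N a b : rowvge N a -> rowvge N b -> rowvge N (a - b).
Proof. by move=> ha hb; apply: rowvgeD => //; apply: rowvgeN. Qed.

Lemma rowvge_le N N' a : N' <= N -> rowvge N a -> rowvge N' a.
Proof. by move=> h ha j; apply: vge_le (ha j). Qed.

Lemma rowvgeZ M N c a : vge w M c -> rowvge N a -> rowvge (M + N) (c *: a).
Proof. by move=> hc ha j; rewrite mxE; apply: vgeM. Qed.

Lemma rowvge_sum N (I : Type) (r : seq I) (P : pred I) (f : I -> 'rV[K]_d) :
  (forall i, P i -> rowvge N (f i)) -> rowvge N (\sum_(i <- r | P i) f i).
Proof.
move=> h; elim/big_rec: _ => [|i x Pi hx]; first exact: rowvge0.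
by apply: rowvgeD => //; apply: h.
Qed.

Lemma rowvge_cauchy_lim (s : nat -> 'rV[K]_d) (k0 : int -> nat) :
  vcomplete w ->
  (forall P i j, (k0 P <= i)%N -> (k0 P <= j)%N -> rowvge P (s i - s j)) ->
  exists l, forall P i, (k0 P <= i)%N -> rowvge P (s i - l).
Proof.
move=> hc hs.
have /fin_all_exists[f hf] : forall j : 'I_d, exists l : K, forall P : int,
    exists k, forall i, (k <= i)%N -> vge w P (s i 0 j - l).
  move=> j; apply: hc => P; exists (k0 P) => i i' hi hi'.
  by have := hs P i i' hi hi' j; rewrite !mxE.
exists (\row_j f j) => P i hi j; have [k hk] := hf j P.
rewrite (_ : (s i - _) 0 j = (s i - s (maxn k i)) 0 j + (s (maxn k i) 0 j - f j)).
  by apply: (vgeD hw); [apply: (hs _ _ _ hi _ j); rewrite (leq_trans hi) ?leq_maxr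
                  | apply/hk/leq_maxl].
by rewrite !mxE addrA subrK.
Qed.

End RowValuation.

Section SmallTensors.
Variables (F : fieldType) (L : fieldExtType F).
Variables (Fh : fieldType) (iota : {rmorphism F -> Fh}) (vh : Fh -> int).
Hypothesis hvh : is_dvaluation vh.
Variable C0 : int.
Hypothesis C0_ge0 : 0 <= C0.
Hypothesis mulcoef_vge : forall k i j, vge vh (- C0) (iota (mulcoef (L:=L) k i j)).
Local Notation T := (tensor L iota).
Local Notation rowvge := (rowvge vh).

Lemma lmulmx_vge N (a : T) i j : rowvge N a -> vge vh (N - C0) (lmulmx iota a i j).
Proof.
move=> ha; rewrite summxE; apply: (vge_sum hvh) => k _.
by rewrite !mxE; apply: (vgeM hvh).
Qed.

Lemma rowvgeM N M (a b : T) : rowvge N a -> rowvge M b -> rowvge (N + M - C0) (a * b).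
Proof.
move=> ha hb j; rewrite tensor_mulE mxE; apply: (vge_sum hvh) => i _.
by rewrite -addrA; apply: (vgeM hvh) => //; apply: lmulmx_vge.
Qed.

(* Shifting by [C0], a bound for the structure constants, makes smallness
   multiplicative. *)
Definition tsmall N (a : T) := rowvge (N + C0) a.

Lemma tsmallM N M (a b : T) : tsmall N a -> tsmall M b -> tsmall (N + M) (a * b).
Proof. by move=> ha hb; apply: rowvge_le (rowvgeM ha hb); lia. Qed.

Lemma tsmall_le N N' (a : T) : N' <= N -> tsmall N a -> tsmall N' a.
Proof. by move=> h; apply: rowvge_le; lia. Qed.

Lemma tsmallZ N c (a : T) : vge vh 0 c -> tsmall N a -> tsmall N (c *: a).
Proof. by move=> hc ha; have := rowvgeZ hvh hc ha; rewrite add0r. Qed.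

Lemma tsmall_exp1B M (e : T) k : 0 <= M -> tsmall M e -> tsmall M ((1 + e) ^+ k - 1).
Proof.
move=> M_ge0 he; elim: k => [|k IH]; first by rewrite expr0 subrr; apply: rowvge0.
rewrite (_ : _ - 1 = ((1 + e) ^+ k - 1) + ((1 + e) ^+ k - 1) * e + e); last first.
  by rewrite exprS; ring.
apply: (rowvgeD hvh) => //; apply: (rowvgeD hvh) => //.
by apply: (tsmall_le (N := M + M)); [lia | apply: tsmallM].
Qed.

Lemma tnorm_near1 N (e : T) : 0 <= N -> tsmall N e -> vge vh N (tnorm (1 + e) - 1).
Proof.
move=> N_ge0 he; rewrite /tnorm -(det1 Fh (\dim {:L})) lmulmxD lmulmx1.
have he' i j : vge vh N (lmulmx iota e i j).
  by apply: vge_le (lmulmx_vge i j he); lia.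
have vge_id i j : vge vh 0 ((1%:M : 'M[Fh]_(\dim {:L})) i j).
  by rewrite mxE; case: (i == j); [apply: (vge1 hvh) | apply: vge0].
apply: (vge_detB hvh) => // i j; last by rewrite mxE addrC addrK.
by rewrite mxE; apply: (vgeD hvh); [apply: vge_id | apply: vge_le (he' i j)].
Qed.

Section NthRoot.
Variable n : nat.
Hypotheses (n_neq0 : (n%:R : Fh) != 0) (n_unit : vh n%:R = 0).
Hypothesis hcomp : vcomplete vh.
Variable N : int.
Hypothesis N_ge1 : 1 <= N.
Variable z : T.
Hypothesis z_near1 : tsmall N (z - 1).

Let ninv : T := (n%:R)^-1 *: (1 : T).

Lemma ninv_natr : ninv * n%:R = 1.
Proof. by rewrite tensor_scalerAl mul1r -scaler_nat scalerA mulVf ?scale1r. Qed.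

Lemma tsmall_ninvM M (a : T) : tsmall M a -> tsmall M (ninv * a).
Proof. by move=> ha; rewrite tensor_scalerAl mul1r; apply: tsmallZ ha; apply: vgeV. Qed.

(* A contraction near [0], as [(1 + e) ^+ n] has derivative close to [n] there;
   its fixed point solves [(1 + e) ^+ n = z]. *)
Definition root_step (e : T) : T := e + ninv * (z - (1 + e) ^+ n).

Lemma root_step_contr K e e' : tsmall N e -> tsmall N e' -> tsmall K (e - e') ->
  tsmall (K + N) (root_step e - root_step e').
Proof.
move=> he he' hK.
set S := \sum_(i < n) (1 + e) ^+ (n.-1 - i) * (1 + e') ^+ i.
have XY : (1 + e) ^+ n - (1 + e') ^+ n = (e - e') * S.
  by rewrite subrXX; congr (_ * _); ring.
have -> : root_step e - root_step e' = (e - e') * (ninv * n%:R)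
    - ninv * ((1 + e) ^+ n - (1 + e') ^+ n).
  by rewrite ninv_natr /root_step; ring.
rewrite XY (_ : _ - _ = (e - e') * - (ninv * (S - n%:R))); last by ring.
apply: tsmallM => //; apply: (rowvgeN hvh); apply: tsmall_ninvM.
rewrite -[n in n%:R]card_ord -sumr_const /S -sumrB; apply: (rowvge_sum hvh) => i _.
set X := (1 + e) ^+ _; set Y := (1 + e') ^+ _.
have hX : tsmall N (X - 1) by apply: tsmall_exp1B => //; lia.
have hY : tsmall N (Y - 1) by apply: tsmall_exp1B => //; lia.
rewrite (_ : X * Y - 1 = (X - 1) * (Y - 1) + (X - 1) + (Y - 1)); last by ring.
apply: (rowvgeD hvh) => //; apply: (rowvgeD hvh) => //.
by apply: (tsmall_le (N := N + N)); [lia | apply: tsmallM].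
Qed.

Definition root_seq k := iter k root_step 0.

Lemma root_seq_small k :
  tsmall N (root_seq k) /\ tsmall (N * k.+1%:R) (root_seq k.+1 - root_seq k).
Proof.
elim: k => [|k [small_k step_k]].
  split; first exact: rowvge0.
  rewrite /root_seq /= subr0 mulr1 /root_step add0r addr0 expr1n.
  exact: tsmall_ninvM.
have small_k1 : tsmall N (root_seq k.+1).
  rewrite -(subrK (root_seq k) (root_seq k.+1)); apply: (rowvgeD hvh) => //.
  by apply: tsmall_le step_k; rewrite -[X in X <= _]mulr1 ler_wpM2l ?ler1n //; lia.
split=> //; apply: tsmall_le (root_step_contr small_k1 small_k step_k).
by rewrite -natr1 mulrDr mulr1.
Qed.

Lemma root_seq_cauchy j i : (j <= i)%N ->
  tsmall (N * j.+1%:R) (root_seq i - root_seq j).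
Proof.
elim: i => [|i IH]; first by rewrite leqn0 => /eqP->; rewrite subrr; apply: rowvge0.
rewrite leq_eqVlt => /orP[/eqP->|lt_ji]; first by rewrite subrr; apply: rowvge0.
rewrite -(subrK (root_seq i) (root_seq i.+1)) -addrA; apply: (rowvgeD hvh).
  by apply: tsmall_le (proj2 (root_seq_small i)); rewrite ler_wpM2l ?ler_nat //; lia.
exact: IH.
Qed.

Lemma exists_nth_root_near1 : exists e : T, tsmall N e /\ (1 + e) ^+ n = z.
Proof.
pose k0 (P : int) : nat := `|P|%N.
have k0P P j : (k0 P <= j)%N -> P <= N * j.+1%:R + C0 by rewrite /k0; nia.
have cauchy P i i' : (k0 P <= i)%N -> (k0 P <= i')%N ->
    rowvge P (root_seq i - root_seq i').
  wlog le_i'i : i i' / (i' <= i)%N.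
    move=> hw hi hi'; have [h|h] := leqP i' i; first exact: hw.
    by rewrite -opprB; apply: (rowvgeN hvh); apply: hw => //; apply: ltnW.
  by move=> _ hi'; apply: rowvge_le (root_seq_cauchy le_i'i); apply: k0P.
have [e lim_e] := rowvge_cauchy_lim hvh hcomp cauchy.
have small_e : tsmall N e.
  rewrite -[e](subKr (root_seq (k0 (N + C0)))); apply: (rowvgeB hvh).
    exact: (proj1 (root_seq_small _)).
  exact: lim_e.
exists e; split => //.
have fix_e : root_step e - e = 0.
  apply/rowP => j; rewrite [RHS]mxE; apply: vge_eq0 => P.
  rewrite -(subrK (root_step (root_seq (k0 P))) (root_step e)) -addrA mxE.
  apply: (vgeD hvh); last exact: (lim_e P (k0 P).+1 (leqnSn _) j).
  have h : tsmall (P - C0) (e - root_seq (k0 P)).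
    by rewrite /tsmall subrK -opprB; apply: (rowvgeN hvh); apply: lim_e.
  apply: vge_le (root_step_contr small_e (proj1 (root_seq_small _)) h j); lia.
move: fix_e; rewrite /root_step addrC addKr tensor_scalerAl mul1r => /eqP.
by rewrite scaler_eq0 invr_eq0 (negPf n_neq0) subr_eq0 => /eqP.
Qed.

End NthRoot.
End SmallTensors.

Section Decomposition.
Variables (F : fieldType) (L : fieldExtType F).
Variables (Fh : fieldType) (iota : {rmorphism F -> Fh}) (vh : Fh -> int).
Hypotheses (hvh : is_dvaluation vh) (hcomp : vcomplete vh).
Hypothesis hdense : forall (x : Fh) (N : int), exists y : F, vge vh N (iota y - x).
Variable n : nat.
Hypotheses (n_neq0 : (n%:R : Fh) != 0) (n_unit : vh n%:R = 0).
Local Notation d := (\dim {:L}).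

Lemma tensor_eq_base_mul_pow (x : tensor L iota) : tnorm x != 0 ->
  exists (u : tensor L idfun) (e : tensor L iota),
    vge vh 1 (tnorm (1 + e) - 1) /\ x = tmap iota u * (1 + e) ^+ n.
Proof.
move=> nx_neq0.
have [C0 [C0_ge0 mulcoef_vge]] := vge_bound vh
  (fun t : 'I_d * 'I_d * 'I_d => iota (mulcoef t.1.1 t.1.2 t.2)).
have {}mulcoef_vge k i j : vge vh (- C0) (iota (mulcoef (L:=L) k i j)).
  exact: (mulcoef_vge (k, i, j)).
have [Cx [_ x_vge]] := vge_bound vh (fun j => x 0 j).
have /fin_all_exists[r r_approx] : forall j : 'I_d, exists y : F,
    vge vh (1 + C0 + Cx + C0) (iota y - tensor_inv x 0 j) by move=> j; apply: hdense.
pose rb : tensor L idfun := \row_j r j.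
have mapM := tmapM (f := iota) (phiA := idfun) (phiB := iota) (fun=> erefl).
have z_near1 : tsmall vh C0 1 (x * tmap iota rb - 1).
  rewrite -(mulr_tensor_inv nx_neq0) -mulrBr.
  apply: rowvge_le (rowvgeM hvh mulcoef_vge x_vge (_ : rowvge vh (1 + C0 + Cx + C0) _)).
    lia.
  by move=> j; move: (r_approx j); rewrite /tmap !mxE.
have [e [e_small e_root]] := exists_nth_root_near1 hvh C0_ge0 mulcoef_vge n_neq0
  n_unit hcomp (lexx 1) z_near1.
have ne_near1 := tnorm_near1 hvh C0_ge0 mulcoef_vge ler01 e_small.
have nrb_neq0 : tnorm rb != 0.
  apply: contraTneq (vge_near1_neq0 hvh ne_near1) => nrb0; apply/negPn/eqP.
  have := congr1 (fun a => tnorm a) e_root; rewrite /= tnormX tnormM.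
  rewrite -(tnorm_map (phiA := idfun) (fun=> erefl)) nrb0 rmorph0 mulr0.
  by move/eqP; rewrite expf_eq0 => /andP[_ /eqP].
exists (tensor_inv rb), e; split => //.
rewrite e_root mulrCA -mapM [tensor_inv rb * _]mulrC mulr_tensor_inv //.
by rewrite (tmap1 L (phiA := idfun) (f := iota) (fun=> erefl)) mulr1.
Qed.

End Decomposition.

Section Descent.
Variables (F Fh : fieldType) (iota : {rmorphism F -> Fh}).
Variables (v : F -> int) (vh : Fh -> int).
Hypotheses (hv : is_dvaluation v) (hH : henselian v) (hvh : is_dvaluation vh).
Hypothesis vh_iota : forall x, x != 0 -> vh (iota x) = v x.

Lemma vge_iota N y : vge vh N (iota y) -> vge v N y.
Proof. by rewrite /vge fmorph_eq0; have [//|y0] := eqVneq y 0; rewrite /= vh_iota. Qed.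

Lemma henselian_nth_root n c : resid_char_ndiv v n -> vge v 1 (c - 1) ->
  exists b, b ^+ n = c.
Proof.
move=> [n_neq0 n_unit] c_near1.
have n_gt0 : (0 < n)%N by rewrite lt0n; apply: contraNneq n_neq0 => ->.
have [b [/rootP + _]] : exists b, root ('X^n - c%:P) b /\ vmax v (b - 1).
  apply: hH; first exact: monicXnsubC.
  - move=> i; rewrite coefB coefXn coefC; apply: (vgeB hv).
      by case: (i == n); [apply: (vge1 hv) | apply: vge0].
    by case: (i == 0%N); [apply: (vge0_near1 hv) | apply: vge0].
  - exact: (vge1 hv).
  - have := vgeN hv c_near1; rewrite opprB !hornerE expr1n /vge /vmax.
    by case: (_ == 0) => //=; lia.
  - rewrite derivB derivXn derivC subr0 hornerMn hornerXn expr1n.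
    by rewrite /vmax (negPf n_neq0) n_unit ltxx.
by rewrite !hornerE => /eqP; rewrite subr_eq0 => /eqP; exists b.
Qed.

(* [s] and [iota b] are [n]-th roots of the same element of [F], so they differ
   by an [n]-th root of unity, which lies in [F]. *)
Lemma iota_near1_descent n (z c : F) (s : Fh) :
  resid_char_ndiv v n -> n.-primitive_root z ->
  vge vh 1 (s - 1) -> iota c * s ^+ n = 1 -> exists s0, iota s0 = s.
Proof.
move=> hn z_prim s_near1 cs1.
have n_gt0 : (0 < n)%N by case: hn; rewrite lt0n => + _; apply: contraNneq => ->.
have c_neq0 : c != 0 by apply: contra_eq_neq cs1 => ->; rewrite rmorph0 mul0r eq_sym oner_neq0.
have iota_cV : iota c^-1 = s ^+ n.
  have iota_c_neq0 : iota c != 0 by rewrite fmorph_eq0.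
  by rewrite fmorphV; apply: (mulfI iota_c_neq0); rewrite mulfV.
have [b bn] : exists b, b ^+ n = c^-1.
  apply: henselian_nth_root hn _; apply: vge_iota.
  by rewrite rmorphB rmorph1 iota_cV; apply: vge_exp_near1.
have b_neq0 : iota b != 0.
  rewrite fmorph_eq0; apply: contra_eq_neq bn => ->.
  by rewrite expr0n gtn_eqF //= eq_sym invr_eq0.
have iota_z_prim : n.-primitive_root (iota z) by rewrite fmorph_primitive_root.
have /(prim_rootP iota_z_prim)[k hk] : (s / iota b) ^+ n = 1.
  by rewrite expr_div_n -rmorphXn bn iota_cV divff // expf_neq0 // (vge_near1_neq0 hvh).
by exists (b * z ^+ k); rewrite rmorphM rmorphXn -hk mulrC divfK.
Qed.

End Descent.

Section RationalCurve.
Variables (F Fh : fieldType) (iota : {rmorphism F -> Fh}).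
Variables (m : nat) (L : 'I_m -> fieldExtType F) (i0 : 'I_m).
Variables (u : forall i, tensor (L i) idfun) (e : forall i, tensor (L i) iota).
Variable s0 : F.
Local Notation n := (\dim {:L i0}).
Local Notation S := (\prod_i tnorm (1 + e i)).
Hypotheses (S_neq0 : S != 0) (iota_s0 : iota s0 = S).
Hypothesis norm_u_S : iota (\prod_i tnorm (u i)) * S ^+ n = 1.

Definition rescaled : pts L F := fun i => (if i == i0 then s0 else 1) *: (u i : 'rV_ _).

Let iotaP : {rmorphism F -> {poly Fh}} := polyC \o iota.
Let factor i : tensor (L i) iotaP := 1 + 'X *: tmap polyC (e i).
Let sigma : {poly Fh} := \prod_i tnorm (factor i).
Let numer i : tensor (L i) iotaP :=
  (if i == i0 then S%:P else sigma) *: (tmap iotaP (u i) * factor i ^+ n).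

Let horner_iotaP t a : horner_eval t (iotaP a) = iota a.
Proof. by rewrite /= horner_evalE hornerC. Qed.

Let horner_factor t i : tmap (horner_eval t) (factor i) = 1 + t *: e i.
Proof.
rewrite tmapD (tmap1 _ (horner_iotaP t)) tmapZ /= horner_evalE hornerX; congr (_ + _ *: _).
by apply/rowP => k; rewrite !mxE /= horner_evalE hornerC.
Qed.

Let horner_sigma t : sigma.[t] = \prod_i tnorm (1 + t *: e i).
Proof.
rewrite -horner_evalE rmorph_prod; apply: eq_bigr => i _.
by rewrite (tnorm_map (horner_iotaP t)) horner_factor.
Qed.

Let horner_numer t i k : (numer i 0 k).[t] =
  ((if i == i0 then S else sigma.[t]) *: (tmap iota (u i) * (1 + t *: e i) ^+ n)) 0 k.
Proof.
have -> : (numer i 0 k).[t] = (tmap (horner_eval t) (numer i) : tensor (L i) iota) 0 k.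
  by rewrite /tmap [RHS]mxE.
congr (_ 0 k); rewrite tmapZ (tmapM (horner_iotaP t)) (tmapX (horner_iotaP t)) horner_factor.
rewrite (_ : tmap _ (tmap iotaP (u i)) = tmap iota (u i)); last first.
  by apply/rowP => k'; rewrite !mxE; apply: horner_iotaP.
by rewrite /= horner_evalE; case: (i == i0); rewrite ?hornerC.
Qed.

Let prod_norm_numer :
  \prod_i normA (fun a => (iota a)%:P) (numer i) = sigma ^+ (\sum_i \dim {:L i}).
Proof.
have tnorm_u i : tnorm (tmap iotaP (u i) : tensor (L i) iotaP) = (iota (tnorm (u i)))%:P.
  by rewrite -(tnorm_map (f := iotaP) (phiA := idfun) (phiB := iotaP) (fun=> erefl)).
under eq_bigr do rewrite (tnorm_normA (phi := iotaP)) tnormZ tnormM tnormX tnorm_u.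
rewrite !big_split /= prodrXl -/sigma (bigD1 i0) //= eqxx.
rewrite (eq_bigr (fun i => sigma ^+ \dim {:L i})) => [|i /negPf -> //].
rewrite prodrXr [in RHS](bigD1 i0) //= exprD -!rmorph_prod mulrACA.
by rewrite -rmorphXn -rmorphM [S ^+ _ * _]mulrC norm_u_S mul1r mulrC.
Qed.

Lemma inT_rescaled : inT id rescaled.
Proof.
apply: (fmorph_inj iota); rewrite rmorph1 -norm_u_S rmorph_prod /inT.
under eq_bigr do rewrite (tnorm_normA (phi := idfun)) tnormZ rmorphM.
rewrite big_split /= mulrC rmorph_prod; congr (_ * _).
rewrite (bigD1 i0) //= eqxx big1 ?mulr1 ?rmorphXn ?iota_s0 // => i /negPf ->.
by rewrite expr1n rmorph1.
Qed.

Lemma Rlink_rescaled (x : pts L Fh) :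
  (forall i, x i = tmap iota (u i) * (1 + e i) ^+ n) ->
  Rlink iota (fun i => map_mx iota (rescaled i)) x.
Proof.
move=> x_eq; have sigma0 : sigma.[0] = 1.
  by rewrite horner_sigma big1 // => i _; rewrite scale0r addr0 tnorm1.
have sigma1 : sigma.[1] = S by rewrite horner_sigma; under eq_bigr do rewrite scale1r.
exists sigma, numer; split.
- by rewrite sigma0 oner_eq0.
- by rewrite sigma1.
- exact: prod_norm_numer.
- move=> i k; rewrite horner_numer sigma0 divr1 scale0r addr0 expr1n mulr1.
  have -> : map_mx iota (rescaled i) =
      iota (if i == i0 then s0 else 1) *: (tmap iota (u i) : tensor (L i) iota) :=
    tmapZ iota _ (u i).
  by case: (i == i0); rewrite ?iota_s0 ?rmorph1.
- move=> i k; rewrite horner_numer sigma1 scale1r -x_eq if_same mxE mulrC.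
  by rewrite mulKf.
Qed.

End RationalCurve.

Lemma prim_root_sqr (R : nzRingType) n (z : R) :
  (n ^ 2).-primitive_root z -> n.-primitive_root (z ^+ n).
Proof.
move=> z_prim; have := prim_order_gt0 z_prim; rewrite expn_gt0 orbF => n_gt0.
by have := dvdn_prim_root z_prim (@dvdn_exp 2 n n isT (dvdnn n)); rewrite -mulnn mulnK.
Qed.

Lemma inT_tnorm_neq0 (F A : fieldType) (phi : {rmorphism F -> A}) m
    (L : 'I_m -> fieldExtType F) (x : pts L A) i :
  inT phi x -> tnorm (x i : tensor (L i) phi) != 0.
Proof.
apply: contra_eq_neq => x_i0.
by rewrite (bigD1 i) //= tnorm_normA x_i0 mul0r eq_sym oner_neq0.
Qed.

Lemma Rlink_ord0 (F M : fieldType) (iota : {rmorphism F -> M})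
    (L : 'I_0 -> fieldExtType F) (x0 x1 : pts L M) : Rlink iota x0 x1.
Proof.
exists 1, (fun=> 0).
by split; rewrite ?hornerC ?oner_eq0 ?big_ord0 ?expr0 //; case.
Qed.

Unset Implicit Arguments. Set Strict Implicit. Set Printing Implicit Defensive.

Theorem mainTheorem19
  (F : fieldType) (v : F -> int)
  (hv : is_dvaluation v) (hH : henselian v)
  (Fh : fieldType) (iota : {rmorphism F -> Fh}) (vh : Fh -> int)
  (hc : is_completion v iota vh)
  (m : nat) (L : 'I_m -> fieldExtType F)
  (hsep : forall i : 'I_m, separable 1%VS (fullv : {vspace L i}))
  (hchar : forall i : 'I_m, resid_char_ndiv v (\dim {:L i}))
  (hroot : forall i : 'I_m, exists z : F, ((\dim {:L i}) ^ 2)%N.-primitive_root z) :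
  forall x : pts L Fh, inT iota x ->
    exists y : pts L F,
      inT id y /\ Requiv iota (fun i => map_mx iota (y i)) x.
Proof.
move=> x hx; have [hvh vh_iota hcomp hdense] := hc.
case: m L hsep hchar hroot x hx => [|m] L _ hchar hroot x hx.
  by exists (fun=> 0); split; [rewrite /inT big_ord0 | apply/rst_step/Rlink_ord0].
pose n := \dim {:L ord0}.
have [n_neq0F n_unitF] := hchar ord0.
have n_neq0 : (n%:R : Fh) != 0 by rewrite -(rmorph_nat iota) fmorph_eq0.
have n_unit : vh n%:R = 0 by rewrite -(rmorph_nat iota) vh_iota.
have /fin_all_exists[u /fin_all_exists[e ue]] i := tensor_eq_base_mul_pow hvh hcomp
  hdense n_neq0 n_unit (inT_tnorm_neq0 i hx).
pose S := \prod_i tnorm (1 + e i).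
have S_near1 : vge vh 1 (S - 1) by apply: vge_prod_near1 => // i; case: (ue i).
have norm_u_S : iota (\prod_i tnorm (u i)) * S ^+ n = 1.
  rewrite -hx rmorph_prod -prodrXl -big_split; apply: eq_bigr => i _.
  rewrite (tnorm_normA (phi := iota)) (proj2 (ue i)) tnormM tnormX.
  by rewrite (tnorm_map (f := iota) (phiA := idfun) (phiB := iota) (fun=> erefl)).
have [z /prim_root_sqr z_prim] := hroot ord0.
have [s0 iota_s0] := iota_near1_descent hv hH hvh vh_iota (hchar ord0) z_prim S_near1 norm_u_S.
have S_neq0 : S != 0 := vge_near1_neq0 hvh S_near1.
exists (rescaled ord0 u s0); split; first exact: inT_rescaled iota_s0 norm_u_S.
by apply/rst_step/(Rlink_rescaled S_neq0 iota_s0 norm_u_S) => i; case: (ue i).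
Qed.
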